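(* For every $n\in\mathbb{N}$ and positive integer $m$, the number of divisors of $\{0,1,\ldots,n\}$ of cardinality exactly $m$ equals the number of headstrong compositions of $n+1$ with exactly $m$ parts.
   Context: A set $B\subseteq\mathbb{N}=\{0,1,\ldots\}$ is a divisor of $A$ if $B+C=A$ for some $C\subseteq\mathbb{N}$, where $B+C=\{b+c:b\in B,c\in C\}$. A composition of a positive integer $N$ is an ordered tuple $(c_1,\ldots,c_m)$ of positive integers summing to $N$ ($m$ parts); it is headstrong if $c_1\ge c_i$ for all $i$. *)

From mathcomp Require Import all_boot all_order.
From mathcomp Require Import finmap.
Set Implicit Arguments. Unset Strict Implicit. Unset Printing Implicit Defensive.
Local Open Scope fset_scope.

Definition sumset_eq (B : {fset nat}) (C : nat -> Prop) (A : nat -> Prop) : Prop :=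
  forall x, A x <-> exists b c, b \in B /\ C c /\ x = (b + c)%N.

Definition is_divisor (B : {fset nat}) (A : nat -> Prop) : Prop :=
  exists C : nat -> Prop, sumset_eq B C A.

Definition interval0 (n : nat) : nat -> Prop := fun x => x <= n.

Definition is_composition (N : nat) (s : seq nat) : bool :=
  all (fun c => 0 < c) s && (sumn s == N).

Definition headstrong (s : seq nat) : bool :=
  all (fun c => c <= head 0 s) s.

(* Number of headstrong compositions of N with exactly m parts.
   Every part of a composition of N is <= N, so parts are drawn from 'I_N.+1. *)
Definition num_headstrong_compositions (N m : nat) : nat :=
  #|[set t : m.-tuple 'I_N.+1 |
      is_composition N (map val t) && headstrong (map val t)]|.

From mathcomp Require Import all_boot all_order finmap zify.
Set Implicit Arguments. Unset Strict Implicit. Unset Printing Implicit Defensive.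

(* A divisor of {0, ..., n} contains 0; write it B = {0 = b_1 < ... < b_m} and
   let c = n + 1 - b_m.  If B + C = {0, ..., n} then C lies in [0, c), so the windows [b_i, b_i + c) cover {0, ..., n};
   conversely, when they do, C = [0, c) is a witness.  The windows cover
   exactly when every gap b_(i+1) - b_i is at most c, that is, when
   (c, b_2 - b_1, ..., b_m - b_(m-1)) is a headstrong composition of n + 1;
   and a composition of n + 1 is determined by its last m - 1 parts. *)

Fixpoint partial_sums (a : nat) (g : seq nat) : seq nat :=
  if g is x :: g' then a :: partial_sums (a + x) g' else [:: a].

Fixpoint gaps (a : nat) (r : seq nat) : seq nat :=
  if r is y :: r' then (y - a) :: gaps y r' else [::].

Lemma size_partial_sums a g : size (partial_sums a g) = (size g).+1.
Proof. by elim: g a => //= x g IH a; rewrite IH. Qed.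

Lemma head_partial_sums a g : head 0 (partial_sums a g) = a.
Proof. by case: g. Qed.

Lemma mem_head_partial_sums a g : a \in partial_sums a g.
Proof. by case: g => [|x g] /=; rewrite inE eqxx. Qed.

Lemma mem_last_partial_sums a g : a + sumn g \in partial_sums a g.
Proof.
elim: g a => [|x g IH] a /=; first by rewrite addn0 inE.
by rewrite inE addnA IH orbT.
Qed.

Lemma mem_partial_sums_bounds a g b :
  b \in partial_sums a g -> a <= b <= a + sumn g.
Proof.
elim: g a => [|x g IH] a /=; first by rewrite inE addn0 => /eqP->; rewrite leqnn.
rewrite inE => /orP[/eqP->|/IH]; first by rewrite leqnn leq_addr.
by rewrite addnA => /andP[h1 ->]; rewrite (leq_trans (leq_addr _ _) h1).
Qed.

Lemma sorted_partial_sums a g :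
  all (fun x => 0 < x) g -> sorted ltn (partial_sums a g).
Proof.
elim: g a => [|x g IH] a //= /andP[x_gt0 g_gt0].
have a_lt : a < a + x by rewrite -{1}(addn0 a) ltn_add2l.
have := IH (a + x) g_gt0.
by case: g {IH g_gt0} => [|y g] /= => [|->]; rewrite a_lt.
Qed.

Lemma uniq_partial_sums a g :
  uniq (partial_sums a g) = all (fun x => 0 < x) g.
Proof.
apply/idP/idP => [|/(sorted_partial_sums a)/(sorted_uniq ltn_trans ltnn) //].
elim: g a => [|x g IH] a //= /andP[a_notin g_uniq].
rewrite (IH _ g_uniq) andbT lt0n; apply: contra a_notin => /eqP->.
by rewrite addn0 mem_head_partial_sums.
Qed.

Lemma partial_sums_inj a : injective (partial_sums a).
Proof.
move=> g1 g2; elim: g1 a g2 => [|x1 g1 IH] a [|x2 g2] //=;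
  try by move/(congr1 size); rewrite /= size_partial_sums.
case=> /[dup] /(congr1 (head 0)); rewrite !head_partial_sums.
by move/addnI=> -> /IH->.
Qed.

Lemma partial_sums_gaps a r :
  sorted leq (a :: r) -> partial_sums a (gaps a r) = a :: r.
Proof.
by elim: r a => [|y r IH] a //= /andP[a_le_y r_sorted]; rewrite subnKC // IH.
Qed.

Lemma partial_sums_coverP a c g : 0 < c ->
  all (fun x => x <= c) g <->
  (forall y, a <= y < a + sumn g + c ->
     exists2 b, b \in partial_sums a g & b <= y < b + c).
Proof.
move=> c_gt0; split.
  elim: g a => [|x g IH] a /=.
    by move=> _ y; rewrite addn0 => y_in; exists a; rewrite ?inE.
  move=> /andP[x_le g_le] y /andP[a_le_y y_lt].
  have [y_lt_ax|ax_le_y] := ltnP y (a + x).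
    by exists a; rewrite ?inE ?eqxx //; lia.
  have [|b b_in b_win] := IH (a + x) g_le y; first lia.
  by exists b; rewrite ?inE ?b_in ?orbT.
elim: g a => [|x g IH] a //= cover.
have x_le_c : x <= c.
  rewrite leqNgt; apply/negP => c_lt_x.
  have [|b b_in /andP[b_le b_gt]] := cover (a + c); first lia.
  move: b_in; rewrite inE => /orP[/eqP b_a|/mem_partial_sums_bounds]; first lia.
  lia.
rewrite x_le_c; apply: (IH (a + x)) => y /andP[ax_le_y y_lt].
have [|b b_in /andP[b_le b_gt]] := cover y; first lia.
move: b_in; rewrite inE => /orP[/eqP b_a|b_in]; last by exists b; rewrite ?b_le.
by exists (a + x); rewrite ?mem_head_partial_sums ?ax_le_y //; lia.
Qed.

Lemma fset_partial_sums (B : {fset nat}) : 0 \in B ->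
  exists g, [/\ all (fun x => 0 < x) g, (size g).+1 = #|` B|%fset &
                partial_sums 0 g =i B].
Proof.
move=> B0.
have mem_r x : (x \in sort leq (enum_fset B)) = (x \in B) by rewrite mem_sort.
have r_sorted := sort_sorted leq_total (enum_fset B).
have r_uniq : uniq (sort leq (enum_fset B)) by rewrite sort_uniq fset_uniq.
have size_r := size_sort leq (enum_fset B).
case: (sort leq (enum_fset B)) mem_r r_sorted r_uniq size_r
  => [|h r] mem_r r_sorted r_uniq size_r; first by move: B0; rewrite -mem_r.
have h0 : h = 0.
  move: B0; rewrite -mem_r inE => /orP[/eqP-> //|].
  by move: r_sorted => /= /(order_path_min leq_trans)/allP/[apply]; lia.
subst h; have ps := partial_sums_gaps r_sorted.
exists (gaps 0 r); split => //.
- by rewrite -(uniq_partial_sums 0) ps.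
- by rewrite -(size_partial_sums 0) ps size_r.
- by move=> x; rewrite ps mem_r.
Qed.

Lemma divisor_interval0_cover B n : is_divisor B (interval0 n) ->
  [/\ 0 \in B, {in B, forall b, b <= n} &
      forall M, M \in B -> forall y, y <= n ->
        exists2 b, b \in B & b <= y < b + (n.+1 - M)].
Proof.
move=> [C BC]; rewrite /interval0 in BC.
have [b0 [c0 [b0_in [c0_in sum0]]]] := proj1 (BC 0) (leq0n n).
have [b00 c00] : b0 = 0 /\ c0 = 0 by lia.
subst b0 c0; split => // [b b_in|M M_in y y_le].
  by apply/(BC b); exists b, 0; rewrite addn0.
have [b [c [b_in [c_in ->]]]] := proj1 (BC y) y_le.
have : M + c <= n by apply/(BC (M + c)); exists M, c.
by exists b => //; lia.
Qed.

(* (c_1, ..., c_m) |-> {0, c_2, c_2 + c_3, ..., c_2 + ... + c_m}; the first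
   part c_1 is dropped and is recovered as N minus the largest element. *)
Definition composition_set (s : seq nat) : {fset nat} :=
  [fset x in partial_sums 0 (behead s)]%fset.

Lemma headstrong_compositionE N c g :
  is_composition N (c :: g) && headstrong (c :: g) =
  [&& 0 < c, all (fun x => 0 < x) g, c + sumn g == N & all (fun x => x <= c) g].
Proof. by rewrite /is_composition /headstrong /= leqnn /= -!andbA. Qed.

Lemma composition_set_card N s :
  is_composition N.+1 s -> #|` composition_set s|%fset = size s.
Proof.
case: s => [|c g]; first by case/andP.
case/andP => /= /andP[_ g_gt0] _.
by rewrite card_fseq undup_id ?size_partial_sums ?uniq_partial_sums.
Qed.

Lemma composition_set_inj N s1 s2 :
  is_composition N s1 -> is_composition N s2 ->
  composition_set s1 = composition_set s2 -> s1 = s2.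
Proof.
move=> /andP[s1_gt0 /eqP sum1] /andP[s2_gt0 /eqP sum2].
case: s1 s2 s1_gt0 s2_gt0 sum1 sum2 => [|c1 g1] [|c2 g2] //=; try lia.
move=> /andP[_ g1_gt0] /andP[_ g2_gt0] sum1 sum2 /fsetP same.
suff g12 : g1 = g2 by subst g2; congr (_ :: _); lia.
apply: (@partial_sums_inj 0); apply: (irr_sorted_eq ltn_trans ltnn);
  rewrite ?sorted_partial_sums //.
by move=> x; have := same x; rewrite !inE.
Qed.

Lemma headstrong_composition_divisor N s :
  is_composition N.+1 s && headstrong s ->
  is_divisor (composition_set s) (interval0 N).
Proof.
case: s => [//|c g].
rewrite headstrong_compositionE => /and4P[c_gt0 _ /eqP sum g_le].
exists (fun z => z < c) => x; rewrite /interval0; split.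
  move=> x_le; have cover := proj1 (@partial_sums_coverP 0 c g c_gt0) g_le.
  have [|b b_in /andP[b_le x_lt]] := cover x; first lia.
  by exists b, (x - b); rewrite inE b_in; split => //; split; lia.
move=> [b [z [b_in [z_lt ->]]]].
move: b_in; rewrite inE /= => /mem_partial_sums_bounds/andP[_].
by rewrite add0n; lia.
Qed.

Lemma divisor_headstrong_composition N B :
  is_divisor B (interval0 N) ->
  exists2 s, is_composition N.+1 s && headstrong s & composition_set s = B.
Proof.
move=> /divisor_interval0_cover[B0 B_le cover].
have [g [g_gt0 _ ps_B]] := fset_partial_sums B0.
have M_in : sumn g \in B by rewrite -ps_B -[sumn g]add0n mem_last_partial_sums.
have M_le := B_le _ M_in.
exists ((N.+1 - sumn g) :: g); last by apply/fsetP => x; rewrite inE ps_B.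
rewrite headstrong_compositionE g_gt0 subn_gt0 ltnS M_le /=.
rewrite subnK ?eqxx //=; last lia.
apply/(partial_sums_coverP 0); first by rewrite subn_gt0 ltnS.
move=> y /andP[_ y_lt]; have [|b b_in b_win] := cover _ M_in y; first lia.
by exists b; rewrite ?ps_B.
Qed.

Lemma headstrong_composition_le N s :
  is_composition N s && headstrong s -> all (fun x => x <= N) s.
Proof.
case: s => [//|c g].
rewrite headstrong_compositionE => /and4P[_ _ /eqP sum /allP g_le].
by apply/allP => x; rewrite inE => /orP[/eqP->|/g_le]; lia.
Qed.

Lemma tuple_of_bounded_seq N m (s : seq nat) :
  all (fun x => x <= N) s -> size s = m ->
  exists t : m.-tuple 'I_N.+1, map val t = s.
Proof.
move=> s_le size_s; have size_map_inord : size (map (@inord N) s) == m.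
  by rewrite size_map size_s.
exists (Tuple size_map_inord) => /=.
elim: s s_le {size_s size_map_inord} => //= x s IH /andP[x_le /IH->].
by rewrite inordK.
Qed.

Local Open Scope fset_scope.

Theorem mainTheorem19 (n m : nat) (hm : 0 < m) :
  exists s : seq {fset nat},
    uniq s /\
    (forall B : {fset nat}, B \in s <-> (is_divisor B (interval0 n) /\ #|` B| = m)) /\
    size s = num_headstrong_compositions n.+1 m.
Proof.
set H := [set t : m.-tuple 'I_n.+2 |
            is_composition n.+1 (map val t) && headstrong (map val t)].
exists [seq composition_set (map val t) | t : m.-tuple _ <- enum H].
split; [|split].
- rewrite map_inj_in_uniq ?enum_uniq // => t1 t2.
  rewrite !mem_enum !inE => /andP[comp1 _] /andP[comp2 _].
  by move/(composition_set_inj comp1 comp2)/(inj_map val_inj)/val_inj.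
- move=> B; split.
    case/mapP => t; rewrite mem_enum inE => hs ->.
    rewrite (composition_set_card (andP hs).1) size_tuple.
    by split; first exact: headstrong_composition_divisor.
  move=> [/divisor_headstrong_composition[s hs <-]].
  rewrite (composition_set_card (andP hs).1) => size_s.
  have [t t_s] := tuple_of_bounded_seq (headstrong_composition_le hs) size_s.
  by apply/mapP; exists t; rewrite ?mem_enum ?inE t_s.
- by rewrite size_map -cardE.
Qed.
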